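(* Let $K\ge 2$, $r\in[0,1]^K$ with $r(1)>r(2)>\cdots>r(K)$, and fix $j\in\{2,\ldots,K\}$. There exists $\bar\varepsilon>0$ such that the following holds. Let $\mathcal{S}_{\bar\varepsilon}:=\{\pi:\ 0<1-\pi(j)<\bar\varepsilon,\ \pi(1)\ge (1-\pi(j))/K\}$, and let $\pi_t=\pi_{\theta(t)}$ be the trajectory of the EG flow started at $\pi_0\in\mathcal{S}_{\bar\varepsilon}$. Write $\varepsilon_0:=1-\pi_0(j)$. Let $\mathcal{W}:=\{\pi:\pi(1)/\pi(j)\ge 1\}$, let $\tau_{\mathcal W}$ be the first time the trajectory enters $\mathcal W$, and let $\tau_{\mathrm{exit}}$ be the first time it leaves $\mathcal{S}_{\bar\varepsilon}$. Then \[ \tau_{\mathcal W}\wedge\tau_{\mathrm{exit}}\;\le\;\frac{4K}{\Delta_{1j}\,\varepsilon_0}\log\!\left(\frac{\pi_0(j)}{\pi_0(1)}\right). \]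
   Context: $K$-armed bandit with softmax policy $\pi_\theta(a)=e^{\theta(a)}/\sum_{a'}e^{\theta(a')}$, $\theta\in\mathbb{R}^K$. Advantage $U(a):=r(a)-\pi_\theta^\top r$; $\Delta_{ab}:=r(a)-r(b)$. The EG (enlightened gradient) flow is the continuous-time ODE $\dot\theta(a)=\sum_{a'=1}^K \mathbf{1}\{U(a')>0\}\,\pi(a')\,U(a')\,(\mathbf{1}\{a=a'\}-\pi(a))$. The constant $\bar\varepsilon$ is one for which, on $\mathcal{S}_{\bar\varepsilon}$, $\frac{d}{dt}\log(\pi(1)/\pi(j))\ge \frac{\Delta_{1j}}{4K}(1-\pi(j))$ and $\frac{d}{dt}(1-\pi(j))>0$ along the EG flow. *)

From HB Require Import structures.
From mathcomp Require Import all_boot all_order all_algebra.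
From mathcomp Require Import all_classical all_reals all_analysis.
Set Implicit Arguments. Unset Strict Implicit. Unset Printing Implicit Defensive.
Import Order.TTheory GRing.Theory Num.Theory.
Import numFieldNormedType.Exports.
Local Open Scope classical_set_scope.
Local Open Scope ring_scope.

Section EG.
Variables (R : realType) (K : nat).

Definition softmax (th : 'I_K -> R) (a : 'I_K) : R :=
  expR (th a) / \sum_(b < K) expR (th b).

Definition adv (r : 'I_K -> R) (th : 'I_K -> R) (a : 'I_K) : R :=
  r a - \sum_(b < K) softmax th b * r b.

Definition eg_field (r : 'I_K -> R) (th : 'I_K -> R) (a : 'I_K) : R :=
  \sum_(a' < K) (if 0 < adv r th a'
                 then softmax th a' * adv r th a' *
                      ((a == a')%:R - softmax th a)
                 else 0).

Definition eg_flow (r : 'I_K -> R) (theta : R -> 'I_K -> R) : Prop :=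
  forall (t : R) (a : 'I_K), 0 <= t ->
    is_derive t 1 (fun s => theta s a) (eg_field r (theta t) a).

Definition in_S (eps : R) (a1 j : 'I_K) (p : 'I_K -> R) : Prop :=
  0 < 1 - p j /\ 1 - p j < eps /\ (1 - p j) / K%:R <= p a1.

Definition in_W (a1 j : 'I_K) (p : 'I_K -> R) : Prop := p a1 / p j >= 1.

(* first time t >= 0 at which P holds (+oo if never) *)
Definition hit_time (P : R -> Prop) : \bar R :=
  ereal_inf [set t%:E | t in [set t : R | 0 <= t /\ P t]].

End EG.

(* Write Δ := r(1) - r(j) and ε := 1 - π(j), and take ε̄ := Δ/(16K). On S_ε̄ the
   advantage of arm 1 is at least Δ - ε while every other effect in the EG field
   is O(ε), and ε² ≤ π(1)Δ/16 since ε ≤ Kπ(1); so the log-odds θ(1) - θ(j) grows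
   at rate at least (Δ/2)π(1). Hence it is nondecreasing while the trajectory
   stays in S_ε̄, which keeps π(1) = e^(θ(1)-θ(j)) π(j) above ε₀/(2K) because
   π(j) ≥ 1/2; the log-odds then grows at least linearly with slope Δε₀/(4K) and
   reaches 0, i.e. the trajectory enters W, within the stated time unless it
   has left S_ε̄ before. *)

From mathcomp Require Import all_boot all_order all_algebra.
From mathcomp Require Import all_classical all_reals all_analysis.
From mathcomp Require Import ring lra.
Set Implicit Arguments. Unset Strict Implicit. Unset Printing Implicit Defensive.
Import Order.TTheory GRing.Theory Num.Theory.
Import numFieldNormedType.Exports.
Local Open Scope classical_set_scope.
Local Open Scope ring_scope.

Section Softmax.
Variables (R : realType) (K : nat).
Implicit Types (th : 'I_K -> R) (a b : 'I_K).

Lemma sum_expR_gt0 th a : 0 < \sum_(b < K) expR (th b).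
Proof.
rewrite (bigD1 a) //= ltr_pwDl ?expR_gt0 //.
by apply: sumr_ge0 => b _; exact/ltW/expR_gt0.
Qed.

Lemma softmax_gt0 th a : 0 < softmax th a.
Proof. by rewrite divr_gt0 ?expR_gt0 ?(sum_expR_gt0 th a). Qed.

Lemma sum_softmax th a : \sum_(b < K) softmax th b = 1.
Proof. by rewrite -mulr_suml divff // gt_eqF ?(sum_expR_gt0 th a). Qed.

Lemma sum_softmax_neq th a : \sum_(b < K | b != a) softmax th b = 1 - softmax th a.
Proof. by have := sum_softmax th a; rewrite (bigD1 a) //= => <-; rewrite addrAC subrr add0r. Qed.

Lemma softmax_add_le1 th a b : a != b -> softmax th a + softmax th b <= 1.
Proof.
move=> neq_ab; rewrite -(sum_softmax th a) (bigD1 a) //= lerD2l.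
rewrite (bigD1 b) 1?eq_sym //= lerDl.
by apply: sumr_ge0 => c _; exact/ltW/softmax_gt0.
Qed.

Lemma ler_softmax th a b : (softmax th a <= softmax th b) = (th a <= th b).
Proof. by rewrite /softmax ler_pM2r ?invr_gt0 ?(sum_expR_gt0 th a) // ler_expR. Qed.

Lemma softmax_ratio th a b : softmax th a / softmax th b = expR (th a - th b).
Proof.
rewrite /softmax expRB invf_div mulrA divfK // gt_eqF //.
exact: sum_expR_gt0.
Qed.

Lemma in_W_softmax th a b : th b <= th a -> in_W a b (softmax th).
Proof. by rewrite /in_W softmax_ratio -expR0 ler_expR subr_ge0. Qed.

End Softmax.

Section EGField.
Variables (R : realType) (K : nat) (r : 'I_K -> R).
Implicit Types (th : 'I_K -> R) (a b : 'I_K).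

Lemma adv_sub th a b : adv r th a - adv r th b = r a - r b.
Proof. by rewrite /adv opprB addrA subrK. Qed.

Lemma normr_adv_le th b : (forall a, 0 <= r a <= 1) ->
  `|adv r th b| <= 1 - softmax th b.
Proof.
move=> r01; rewrite /adv.
have -> : r b = \sum_(c < K) softmax th c * r b by rewrite -mulr_suml sum_softmax ?mul1r.
rewrite -sumrB (bigD1 b) //= -mulrBr subrr mulr0 add0r -sum_softmax_neq.
apply: le_trans (ler_norm_sum _ _ _) _; apply: ler_sum => c _.
rewrite -mulrBr normrM gtr0_norm ?softmax_gt0 //.
apply: ler_piMr; first exact/ltW/softmax_gt0.
by rewrite ler_norml; have := r01 b; have := r01 c; lra.
Qed.

Definition eg_gain th a : R :=
  if 0 < adv r th a then softmax th a * adv r th a else 0.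

Lemma eg_gain_ge0 th a : 0 <= eg_gain th a.
Proof.
rewrite /eg_gain; case: ifP => // /ltW adv_ge0.
by rewrite mulr_ge0 // ltW ?softmax_gt0.
Qed.

Lemma eg_gain_le th a : eg_gain th a <= softmax th a * `|adv r th a|.
Proof.
rewrite /eg_gain; case: ifP => [_|_]; last by rewrite mulr_ge0 // ltW ?softmax_gt0.
by rewrite ler_wpM2l ?ler_norm // ltW ?softmax_gt0.
Qed.

Lemma eg_fieldE th a :
  eg_field r th a = eg_gain th a - softmax th a * \sum_(b < K) eg_gain th b.
Proof.
transitivity (\sum_(b < K) eg_gain th b * ((a == b)%:R - softmax th a)).
  by apply: eq_bigr => b _; rewrite /eg_gain; case: ifP; rewrite ?mul0r.
under eq_bigr do rewrite mulrBr.
rewrite sumrB mulr_sumr; congr (_ - _); last by apply: eq_bigr => b _; rewrite mulrC.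
rewrite (bigD1 a) //= eqxx mulr1 big1 ?addr0 // => b neq_ba.
by rewrite eq_sym (negbTE neq_ba) mulr0.
Qed.

Lemma eg_field_sub_ge th a b : a != b -> softmax th a <= softmax th b ->
  eg_gain th a * (1 + softmax th b - softmax th a)
    - eg_gain th b * (1 + softmax th a - softmax th b)
  <= eg_field r th a - eg_field r th b.
Proof.
move=> neq_ab le_ab; rewrite !eg_fieldE.
have gain_ab : eg_gain th a + eg_gain th b <= \sum_(c < K) eg_gain th c.
  rewrite (bigD1 a) //= lerD2l (bigD1 b) 1?eq_sym //= lerDl.
  by apply: sumr_ge0 => c _; exact: eg_gain_ge0.
have /ler_wpM2l/(_ _ _ gain_ab) : 0 <= softmax th b - softmax th a by rewrite subr_ge0.
nra.
Qed.

End EGField.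

Lemma growth_of_derive_ge (R : realType) (f df : R -> R) (a b c : R) : a <= b ->
  (forall t, a <= t <= b -> is_derive t 1 f (df t)) ->
  (forall t, a < t < b -> c <= df t) ->
  f a + c * (b - a) <= f b.
Proof.
rewrite le_eqVlt => /predU1P[<- _ _|lt_ab f_deriv df_ge]; first by rewrite subrr mulr0 addr0.
have f_cont : {within `[a, b], continuous f}.
  apply: derivable_within_continuous => t t_ab.
  by move: t_ab; rewrite in_itv /= => /f_deriv H; exact: ex_derive.
have f_deriv_oo t : t \in `]a, b[ -> is_derive t 1 f (df t).
  by rewrite in_itv /= => /andP[/ltW ? /ltW ?]; apply: f_deriv; apply/andP.
have [t t_ab mvt] := MVT lt_ab f_deriv_oo f_cont.
rewrite addrC -lerBrDr mvt; apply: ler_wpM2r; first by rewrite subr_ge0 ltW.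
by apply: df_ge; rewrite in_itv in t_ab.
Qed.

Lemma hit_time_le (R : realType) (P : R -> Prop) (t b : R) :
  0 <= t <= b -> P t -> (hit_time P <= b%:E)%E.
Proof.
case/andP=> t_ge0 t_le_b Pt; apply: ge_ereal_inf.
by exists t%:E; [exists t | rewrite lee_fin].
Qed.

Section NearVertex.
Variables (R : realType) (K : nat) (r : 'I_K -> R) (a1 j : 'I_K) (eps : R).
Hypotheses (r01 : forall a, 0 <= r a <= 1) (neq_a1j : a1 != j) (lt_r : r j < r a1).
Hypothesis small_eps : eps * K%:R <= (r a1 - r j) / 16.
Implicit Types (th : 'I_K -> R).

Let K_ge1 : 1 <= K%:R :> R.
Proof. by rewrite ler1n (leq_ltn_trans _ (ltn_ord a1)). Qed.

Lemma in_S_mass_le th : in_S eps a1 j (softmax th) ->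
  (1 - softmax th j) * K%:R <= (r a1 - r j) / 16.
Proof.
case=> e_gt0 [/ltW e_le_eps _]; apply: le_trans small_eps.
by rewrite ler_wpM2r // (le_trans ler01).
Qed.

Lemma in_S_mass_le_gap th : in_S eps a1 j (softmax th) ->
  1 - softmax th j <= (r a1 - r j) / 16.
Proof.
move=> S_th; apply: le_trans (in_S_mass_le S_th).
by apply: ler_peMr; [exact/ltW/S_th.1 | exact: K_ge1].
Qed.

Lemma in_S_softmax_ge_half th : in_S eps a1 j (softmax th) -> 1 / 2 <= softmax th j.
Proof.
move/in_S_mass_le_gap; have /andP[_ r1_le1] := r01 a1; have /andP[rj_ge0 _] := r01 j.
lra.
Qed.

Lemma in_S_softmax_le th : in_S eps a1 j (softmax th) -> softmax th a1 <= softmax th j.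
Proof.
move/in_S_softmax_ge_half; have := softmax_add_le1 th neq_a1j; lra.
Qed.

Lemma eg_field_gap_ge th : in_S eps a1 j (softmax th) ->
  (r a1 - r j) / 2 * softmax th a1 <= eg_field r th a1 - eg_field r th j.
Proof.
move=> S_th; have eK_le := in_S_mass_le S_th; have e_le_D := in_S_mass_le_gap S_th.
have p1_le_pj := in_S_softmax_le S_th.
have := eg_field_sub_ge r neq_a1j p1_le_pj.
case: S_th => e_gt0 [_ e_le_Kp1]; have p1_pj_le1 := softmax_add_le1 th neq_a1j.
have adv_j := normr_adv_le th j r01; have p1_gt0 := softmax_gt0 th a1.
set D := r a1 - r j in eK_le e_le_D *.
set p1 := softmax th a1 in p1_le_pj e_le_Kp1 p1_pj_le1 p1_gt0 *.
set pj := softmax th j in p1_le_pj e_gt0 e_le_Kp1 eK_le e_le_D p1_pj_le1 adv_j *.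
set e := 1 - pj in e_gt0 e_le_Kp1 eK_le e_le_D adv_j *; have pj_e : pj = 1 - e by rewrite /e subKr.
have {}e_le_Kp1 : e <= p1 * K%:R by rewrite -ler_pdivrMr // (lt_le_trans ltr01).
have gain_1 : p1 * (D - e) <= eg_gain r th a1.
  have adv_1 : adv r th a1 = D + adv r th j by rewrite /D -(adv_sub r th) subrK.
  have /andP[adv_j_ge _] : - e <= adv r th j <= e by rewrite -ler_norml.
  have adv_1_gt0 : 0 < adv r th a1 by rewrite adv_1; lra.
  rewrite /eg_gain adv_1_gt0 adv_1; apply: ler_wpM2l; [exact: ltW | lra].
have gain_j : eg_gain r th j <= e.
  apply: le_trans (eg_gain_le r th j) (le_trans _ adv_j).
  have pj_le1 : pj <= 1 by lra.
  by apply: ler_piMl; [exact: normr_ge0 | exact: pj_le1].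
have gain_1_bonus : 0 <= eg_gain r th a1 * (pj - p1).
  by rewrite mulr_ge0 ?eg_gain_ge0 ?subr_ge0.
have gain_j_loss : eg_gain r th j * (1 + p1 - pj) <= e * (2 * e).
  by apply: ler_pM; rewrite ?eg_gain_ge0 //; lra.
have e2_le : e * e <= p1 * (D / 16).
  apply: le_trans (ler_wpM2l (ltW p1_gt0) eK_le).
  by rewrite mulrCA; apply: ler_wpM2l; [exact: ltW | exact: e_le_Kp1].
(* p1 (D - e) - 2 e^2 >= p1 (D - D/16 - D/8) >= p1 D / 2 *)
nra.
Qed.

Variables (T : R) (theta : R -> 'I_K -> R).
Hypothesis flow : eg_flow r theta.
Hypothesis stay : forall t : R, 0 <= t <= T -> in_S eps a1 j (softmax (theta t)).

Local Notation pi t := (softmax (theta t)).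
Local Notation gap t := (theta t a1 - theta t j).
Local Notation gap_speed t := (eg_field r (theta t) a1 - eg_field r (theta t) j).

Let gap_derive (t : R) : 0 <= t ->
  is_derive t 1 (fun s => gap s) (gap_speed t).
Proof. by move=> t_ge0; apply: is_deriveB; apply: flow. Qed.

Let gap_rate (t : R) : 0 <= t <= T ->
  (r a1 - r j) / 2 * pi t a1 <= gap_speed t.
Proof. by move=> /stay; exact: eg_field_gap_ge. Qed.

Lemma eg_gap_nondecr (t : R) : 0 <= t <= T -> gap 0 <= gap t.
Proof.
case/andP=> t_ge0 t_le_T.
rewrite -[X in X <= _]addr0 -[X in _ + X <= _](mul0r (t - 0)).
apply: (@growth_of_derive_ge _ (fun s => gap s) (fun s => gap_speed s)) => // s.
  by case/andP=> s_ge0 _; exact: gap_derive.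
case/andP=> /ltW s_ge0 /ltW s_le_t; apply: le_trans (gap_rate _) => //.
  by apply: mulr_ge0; [rewrite divr_ge0 // subr_ge0 ltW | exact/ltW/softmax_gt0].
by apply/andP; split; last exact: le_trans s_le_t t_le_T.
Qed.

Lemma eg_softmax_a1_lb (t : R) : 0 <= t <= T ->
  (1 - pi 0 j) / (2 * K%:R) <= pi t a1.
Proof.
move=> t_in; have T_ge0 : 0 <= T by case/andP: t_in => /le_trans; apply.
have [eps0_gt0 [_ eps0_le]] : in_S eps a1 j (pi 0) by apply: stay; rewrite lexx T_ge0.
have pj_t_ge := in_S_softmax_ge_half (stay t_in).
have pi_t_a1 : pi t a1 = expR (gap t) * pi t j.
  by rewrite -softmax_ratio divfK // gt_eqF ?softmax_gt0.
have ratio_0 : pi 0 a1 <= expR (gap 0).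
  rewrite -softmax_ratio ler_pdivlMr ?softmax_gt0 //.
  apply: ler_piMr; first exact/ltW/softmax_gt0.
  by have := softmax_add_le1 (theta 0) neq_a1j; have := softmax_gt0 (theta 0) a1; lra.
have -> : (1 - pi 0 j) / (2 * K%:R) = (1 - pi 0 j) / K%:R / 2.
  by rewrite invfM mulrA mulrAC.
rewrite pi_t_a1; apply: ler_pM.
- by rewrite divr_ge0 ?ler0n ?ltW.
- by rewrite invr_ge0 ler0n.
- by apply: le_trans eps0_le (le_trans ratio_0 _); rewrite ler_expR eg_gap_nondecr.
- by rewrite -div1r.
Qed.

Lemma eg_gap_growth : 0 <= T ->
  gap 0 + (r a1 - r j) * (1 - pi 0 j) / (4 * K%:R) * T <= gap T.
Proof.
move=> T_ge0; rewrite -[T in _ * T]subr0.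
apply: (@growth_of_derive_ge _ (fun s => gap s) (fun s => gap_speed s)) => // s.
  by case/andP=> s_ge0 _; exact: gap_derive.
case/andP=> /ltW s_ge0 /ltW s_le_T; have s_in : 0 <= s <= T by rewrite s_ge0.
apply: le_trans (gap_rate s_in).
have -> : (r a1 - r j) * (1 - pi 0 j) / (4 * K%:R)
          = (r a1 - r j) / 2 * ((1 - pi 0 j) / (2 * K%:R)).
  by field; rewrite gt_eqF // (lt_le_trans ltr01 K_ge1).
apply: ler_wpM2l; last exact: eg_softmax_a1_lb.
by rewrite divr_ge0 // subr_ge0 ltW.
Qed.

End NearVertex.

Theorem theorem3 (R : realType) (K : nat) (hK : (2 <= K)%N)
  (r : 'I_K -> R) (a1 j : 'I_K)
  (ha1 : nat_of_ord a1 = 0%N) (hj : nat_of_ord j <> 0%N)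
  (hr01 : forall a, 0 <= r a <= 1)
  (hrdec : forall a b : 'I_K, (a < b)%N -> r b < r a) :
  exists epsbar : R, 0 < epsbar /\
    forall theta : R -> 'I_K -> R,
      eg_flow r theta ->
      in_S epsbar a1 j (softmax (theta 0)) ->
      let pi := fun t => softmax (theta t) in
      let eps0 := 1 - pi 0 j in
      (Order.min (hit_time (fun t => in_W a1 j (pi t)))
                 (hit_time (fun t => ~ in_S epsbar a1 j (pi t)))
       <= ((4 * K%:R) / ((r a1 - r j) * eps0) * ln (pi 0 j / pi 0 a1))%:E)%E.
Proof.
have neq_a1j : a1 != j by apply/eqP => eq_a1j; apply: hj; rewrite -eq_a1j.
have lt_r : r j < r a1 by apply: hrdec; rewrite ha1 lt0n; apply/eqP.
have K_gt0 : 0 < K%:R :> R by rewrite ltr0n (leq_trans _ hK).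
exists ((r a1 - r j) / (16 * K%:R)); split; first by rewrite divr_gt0 ?mulr_gt0 ?subr_gt0.
move=> theta flow S0 /=; set eps := (r a1 - r j) / (16 * K%:R) in S0 *.
have small_eps : eps * K%:R <= (r a1 - r j) / 16 by rewrite /eps invfM mulrA mulfVK ?gt_eqF.
have eps0_gt0 := S0.1.
rewrite softmax_ratio expRK; set T := _ * (theta 0 j - theta 0 a1).
have T_ge0 : 0 <= T.
  apply: mulr_ge0; last by rewrite subr_ge0 -ler_softmax (in_S_softmax_le hr01 neq_a1j small_eps).
  by rewrite divr_ge0 ?mulr_ge0 ?ler0n // ltW // subr_gt0.
have [[t t_in exit_t] | no_exit] :=
  pselect (exists2 t, 0 <= t <= T & ~ in_S eps a1 j (softmax (theta t))).
  by rewrite ge_min; apply/orP; right; exact: hit_time_le t_in exit_t.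
have stay t : 0 <= t <= T -> in_S eps a1 j (softmax (theta t)).
  by move=> t_in; apply: contrapT => exit_t; apply: no_exit; exists t.
rewrite ge_min; apply/orP; left; apply: (@hit_time_le _ _ T); first by rewrite T_ge0 lexx.
apply: in_W_softmax; rewrite -subr_ge0.
have := eg_gap_growth hr01 neq_a1j lt_r small_eps flow stay T_ge0.
have -> : (r a1 - r j) * (1 - softmax (theta 0) j) / (4 * K%:R) * T = theta 0 j - theta 0 a1.
  by rewrite /T; field; rewrite !gt_eqF // subr_gt0.
by rewrite [X in X <= _]addrC -opprB addNr.
Qed.
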